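(* Let $a\in\mathbb{C}$ with $|a-\tfrac14|\le\tfrac14$ and $a\neq0$, and let $\varphi(z)=az^2+(1-2a)z+a$. Then the iterates $\varphi_n$ converge to $1$ uniformly on the entire open disk $\mathbb{D}$.
   Context: $\mathbb{D}$ is the open unit disk; $\varphi_n$ denotes the $n$-th iterate of $\varphi$. Uniform convergence on $\mathbb{D}$ means $\lim_{n\to\infty}\sup_{z\in\mathbb{D}}|\varphi_n(z)-1|=0$. *)

From Stdlib Require Import Reals.
From Coquelicot Require Import Coquelicot.
Open Scope R_scope.

Definition phi (a z : C) : C :=
  (a * (z * z) + (1 - 2 * a) * z + a)%C.

Definition phi_iter (a : C) (n : nat) (z : C) : C :=
  Nat.iter n (phi a) z.

(* Conjugating by z = 1 + 1/s turns phi into s |-> s^2/(s + a) = s - a + a^2/(s + a) and maps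
   the unit disk into the half-plane Re s < -1/2, which this map preserves.  Write a = al + i be.
   On that half-plane Re s never increases, the component Re(conj(a) s) of s along a drops by at
   least |a|^2/2 at each step, and as soon as that component exceeds 3/al in absolute value Re s
   itself drops by at least al/2.  Hence the potential
     -(2/al) Re s - (2/|a|^2) Re(conj(a) s),
   with the second term clipped to [-K, K] (K = 3/al + 1) so that it stays bounded below, grows by
   at least 1 per step uniformly in s.  So |s_n| -> oo uniformly, and phi_n(z) - 1 = 1/s_n. *)

From Stdlib Require Import Reals Lra Psatz.
From Coquelicot Require Import Coquelicot.
Open Scope R_scope.

Lemma Re_div (u w : C) : w <> 0%C ->
  Re (u / w) = (Re u * Re w + Im u * Im w) / Cmod w ^ 2.
Proof.
  intros Hw. rewrite Cmod2_alt.
  assert (Hn : Re w ^ 2 + Im w ^ 2 <> 0).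
  { rewrite <- Cmod2_alt. apply pow_nonzero. intro H. now apply Hw, Cmod_eq_0. }
  destruct u as [x y], w as [p q]. unfold Re, Im in *; simpl in *.
  field. contradict Hn. lra.
Qed.

Lemma re_sq_div_num_le (al be p q : R) : 0 < al -> al * al + be * be <= al / 2 ->
  p < al - 1/2 -> (al * al - be * be) * p + 2 * al * be * q <= al * (p * p + q * q).
Proof.
  intros Hal Hdisk Hp.
  set (c := 1/2 - al).
  (* Both factors of the first product are <= 0, so c times the left side is <= be^2 (p^2 + q^2),
     and be^2 <= al c is the disk hypothesis. *)
  assert (Hid : be * be * (p * p + q * q) - c * ((al * al - be * be) * p + 2 * al * be * q)
     = (p + c) * (be * be * p - c * al * al) + (be * q - c * al) * (be * q - c * al)) by ring.
  assert (Hbe : be * be <= al * c) by (unfold c; lra).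
  assert (Hc : 0 <= c) by (unfold c; nra).
  assert (Hsign : 0 <= (p + c) * (be * be * p - c * al * al)).
  { assert (be * be * p - c * al * al <= 0) by nra. unfold c in *; nra. }
  assert (HN : be * be * (p * p + q * q) <= al * c * (p * p + q * q)) by nra.
  destruct (Rle_lt_or_eq_dec 0 c Hc) as [Hc'|Hc'].
  - pose proof (Rle_0_sqr (be * q - c * al)) as Hsq. unfold Rsqr in Hsq.
    apply (Rmult_le_reg_l c); lra.
  - assert (be = 0) by nra. unfold c in Hc'. subst be. nra.
Qed.

Lemma neq0_of_Re_lt (w : C) : Re w < 0 -> w <> 0%C.
Proof. intros Hw E. rewrite E in Hw. simpl in Hw. lra. Qed.

Lemma Re_sq_div_le_half (a w : C) : w <> 0%C ->
  2 * Cmod a ^ 2 <= Re a * Cmod w -> Re (a * a / w) <= Re a / 2.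
Proof.
  intros Hw Hfar.
  assert (Hw0 : 0 < Cmod w) by now apply Cmod_gt_0.
  pose proof (re_le_Cmod (a * a / w)) as Hre.
  rewrite Cmod_div, Cmod_mult in Hre by exact Hw.
  pose proof (Rle_abs (Re (a * a / w))).
  apply Rle_div_l in Hfar; [|exact Hw0].
  assert (Cmod a * Cmod a / Cmod w <= Re a / 2); [|lra].
  unfold Rdiv in *. nra.
Qed.

Definition next (a s : C) : C := (s * s / (s + a))%C.

Definition along (a s : C) : R := Re (Cconj a * s).

Lemma next_eq (a s : C) : (s + a <> 0)%C -> next a s = (s - a + a * a / (s + a))%C.
Proof. intros H. unfold next. field. exact H. Qed.

Lemma Re_next (a s : C) : (s + a <> 0)%C ->
  Re (next a s) = Re s - Re a + Re (a * a / (s + a)).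
Proof. intros H. rewrite next_eq by exact H. unfold Cminus. rewrite !re_plus, re_opp. ring. Qed.

Lemma along_next (a s : C) : (s + a <> 0)%C ->
  along a (next a s) = along a s - Cmod a ^ 2 + Cmod a ^ 2 * Re (a / (s + a)).
Proof.
  intros H. rewrite next_eq by exact H. unfold along.
  replace (Cconj a * (s - a + a * a / (s + a)))%C
    with (Cconj a * s - a * Cconj a + a * Cconj a * (a / (s + a)))%C by (field; exact H).
  rewrite <- Cmod2_conj. unfold Cminus. rewrite !re_plus, re_opp, re_scal_l, re_RtoC. ring.
Qed.

Lemma phi_inv (a s : C) : s <> 0%C -> (s + a <> 0)%C ->
  phi a (1 + / s) = (1 + / next a s)%C.
Proof.
  intros Hs Hsa.
  replace (phi a (1 + / s)) with (1 + (phi a (1 + / s) - 1))%C by ring.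
  f_equal. unfold phi, next. field. split; assumption.
Qed.

Definition clip (K v : R) : R := Rmax (- K) (Rmin v K).

Lemma clip_bound (K v : R) : 0 <= K -> - K <= clip K v <= K.
Proof. intros. unfold clip, Rmax, Rmin. repeat destruct Rle_dec; lra. Qed.

Lemma clip_step_or (K d v v' : R) : 0 < d <= 1 -> v' <= v - d ->
  clip K v' <= clip K v - d \/ (K - 1 < Rabs v /\ clip K v' <= clip K v).
Proof. intros. unfold clip, Rmax, Rmin, Rabs. repeat destruct Rle_dec; destruct Rcase_abs; lra. Qed.

Definition potential (a s : C) : R :=
  - (2 / Re a) * Re s - (2 / Cmod a ^ 2) * clip (3 / Re a + 1) (along a s).

Section NextStep.

Variable a : C.
Hypothesis Ha_pos : 0 < Re a.
Hypothesis Ha_disk : Cmod a ^ 2 <= Re a / 2.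

Lemma disk_sq : Re a * Re a + Im a * Im a <= Re a / 2.
Proof. rewrite Cmod2_alt in Ha_disk. lra. Qed.

Lemma Re_le_half : Re a <= 1/2.
Proof. pose proof disk_sq. nra. Qed.

Lemma Re_sq_div_le (w : C) : Re w < Re a - 1/2 -> Re (a * a / w) <= Re a.
Proof.
  intros Hw. pose proof Re_le_half.
  assert (Hw0 : w <> 0%C) by (apply neq0_of_Re_lt; lra).
  rewrite Re_div by exact Hw0. apply Rle_div_l; [apply pow_lt; now apply Cmod_gt_0|].
  rewrite Cmod2_alt. pose proof disk_sq as Hsq.
  destruct a as [al be], w as [p q]. unfold Re, Im in *; simpl in *.
  pose proof (re_sq_div_num_le al be p q Ha_pos Hsq Hw). nra.
Qed.

Lemma Re_div_le_half (w : C) : Re w < Re a - 1/2 -> Re (a / w) <= 1/2.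
Proof.
  intros Hw. pose proof Re_le_half.
  assert (Hw0 : w <> 0%C) by (apply neq0_of_Re_lt; lra).
  rewrite Re_div by exact Hw0. apply Rle_div_l; [apply pow_lt; now apply Cmod_gt_0|].
  rewrite Cmod2_alt. pose proof disk_sq.
  destruct a as [al be], w as [p q]. unfold Re, Im in *; simpl in *.
  pose proof (Rle_0_sqr (q - be)). unfold Rsqr in *. nra.
Qed.

Lemma Re_add_lt (s : C) : Re s < -1/2 -> Re (s + a) < Re a - 1/2 /\ (s + a <> 0)%C.
Proof.
  intros Hs. pose proof Re_le_half. rewrite re_plus.
  split; [lra|]. apply neq0_of_Re_lt. rewrite re_plus. lra.
Qed.

Lemma Re_next_le (s : C) : Re s < -1/2 -> Re (next a s) <= Re s.
Proof.
  intros Hs. destruct (Re_add_lt s Hs) as [Hw Hw0].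
  rewrite Re_next by exact Hw0. pose proof (Re_sq_div_le _ Hw). lra.
Qed.

Lemma along_next_le (s : C) : Re s < -1/2 ->
  along a (next a s) <= along a s - Cmod a ^ 2 / 2.
Proof.
  intros Hs. destruct (Re_add_lt s Hs) as [Hw Hw0].
  rewrite along_next by exact Hw0. pose proof (Re_div_le_half _ Hw).
  assert (Cmod a ^ 2 * Re (a / (s + a)) <= Cmod a ^ 2 * (1/2))
    by (apply Rmult_le_compat_l; [apply pow_le, Cmod_ge_0 | lra]).
  lra.
Qed.

Lemma Re_next_le_far (s : C) : Re s < -1/2 -> 3 / Re a < Rabs (along a s) ->
  Re (next a s) <= Re s - Re a / 2.
Proof.
  intros Hs Hfar. destruct (Re_add_lt s Hs) as [Hw Hw0].
  rewrite Re_next by exact Hw0.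
  assert (Hshift : along a s = Re (Cconj a * (s + a)) - Cmod a ^ 2).
  { unfold along.
    rewrite Cmult_plus_distr_l, re_plus, (Cmult_comm (Cconj a) a), <- Cmod2_conj, re_RtoC.
    ring. }
  pose proof (re_le_Cmod (Cconj a * (s + a))) as Hmod.
  rewrite Cmod_mult, Cmod_conj in Hmod.
  assert (HX : 3 / Re a - Cmod a ^ 2 < Rabs (Re (Cconj a * (s + a)))).
  { rewrite Hshift in Hfar. pose proof (pow_le (Cmod a) 2 (Cmod_ge_0 a)).
    unfold Rabs in *. destruct (Rcase_abs _), (Rcase_abs _); lra. }
  assert (H3 : Re a * (3 / Re a) = 3) by (field; lra).
  assert (Ha0 : 0 < Cmod a) by (apply Cmod_gt_0; intro E; rewrite E in Ha_pos; simpl in Ha_pos; lra).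
  pose proof Re_le_half. pose proof (Cmod_ge_0 (s + a)).
  assert (Hfar' : 2 < Re a * (Cmod a * Cmod (s + a))) by nra.
  pose proof (Re_sq_div_le_half a (s + a) Hw0 ltac:(nra)). lra.
Qed.

Let rho_pos : 0 < Cmod a ^ 2.
Proof. apply pow_lt, Cmod_gt_0. intro E. rewrite E in Ha_pos. simpl in Ha_pos. lra. Qed.

Let K_pos : 0 < 3 / Re a + 1.
Proof. assert (0 < 3 / Re a) by (apply Rdiv_lt_0_compat; lra). lra. Qed.

Lemma potential_next (s : C) : Re s < -1/2 -> potential a s + 1 <= potential a (next a s).
Proof.
  intros Hs. pose proof rho_pos. pose proof Re_le_half. unfold potential.
  set (rho := Cmod a ^ 2) in *. set (t := 2 / Re a). set (u := 2 / rho).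
  set (c := clip _ (along a s)). set (c' := clip _ (along a (next a s))).
  assert (Ht : 0 < t /\ t * (Re a / 2) = 1)
    by (unfold t; split; [apply Rdiv_lt_0_compat | field]; lra).
  assert (Hu : 0 < u /\ u * (rho / 2) = 1)
    by (unfold u; split; [apply Rdiv_lt_0_compat | field]; lra).
  assert (Hrho : 0 < rho / 2 <= 1) by (split; lra).
  destruct (clip_step_or (3 / Re a + 1) _ _ _ Hrho (along_next_le s Hs)) as [Hc | [Hfar Hc]];
    fold c c' in Hc.
  - assert (t * Re (next a s) <= t * Re s)
      by (apply Rmult_le_compat_l; [lra | exact (Re_next_le s Hs)]).
    assert (u * c' <= u * (c - rho / 2)) by (apply Rmult_le_compat_l; lra).
    lra.
  - replace (3 / Re a + 1 - 1) with (3 / Re a) in Hfar by ring.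
    assert (t * Re (next a s) <= t * (Re s - Re a / 2))
      by (apply Rmult_le_compat_l; [lra | exact (Re_next_le_far s Hs Hfar)]).
    assert (u * c' <= u * c) by (apply Rmult_le_compat_l; lra).
    lra.
Qed.

Lemma potential_lower (s : C) : Re s <= 0 ->
  - (2 / Cmod a ^ 2) * (3 / Re a + 1) <= potential a s.
Proof.
  intros Hs. pose proof rho_pos. pose proof K_pos. unfold potential.
  destruct (clip_bound (3 / Re a + 1) (along a s)) as [_ Hc]; [lra|].
  assert (0 < 2 / Cmod a ^ 2) by (apply Rdiv_lt_0_compat; lra).
  assert (0 < 2 / Re a) by (apply Rdiv_lt_0_compat; lra).
  nra.
Qed.

Lemma potential_upper (s : C) :
  potential a s <= 2 / Re a * Cmod s + (2 / Cmod a ^ 2) * (3 / Re a + 1).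
Proof.
  pose proof rho_pos. pose proof K_pos. unfold potential.
  destruct (clip_bound (3 / Re a + 1) (along a s)) as [Hc _]; [lra|].
  assert (0 < 2 / Cmod a ^ 2) by (apply Rdiv_lt_0_compat; lra).
  assert (0 < 2 / Re a) by (apply Rdiv_lt_0_compat; lra).
  pose proof (re_le_Cmod s). pose proof (Rabs_maj2 (Re s)).
  nra.
Qed.

Lemma iter_next_potential (s : C) (n : nat) : Re s < -1/2 ->
  Re (Nat.iter n (next a) s) < -1/2 /\
  INR n + potential a s <= potential a (Nat.iter n (next a) s).
Proof.
  intros Hs. induction n as [|n [IHre IHpot]].
  - simpl. lra.
  - rewrite Nat.iter_succ, S_INR.
    pose proof (Re_next_le _ IHre). pose proof (potential_next _ IHre). split; lra.
Qed.

Lemma iter_next_escapes (M : R) : exists N : nat, forall n : nat, (N <= n)%nat ->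
  forall s : C, Re s < -1/2 -> M < Cmod (Nat.iter n (next a) s).
Proof.
  set (B := 2 / Cmod a ^ 2 * (3 / Re a + 1)).
  destruct (INR_unbounded (2 / Re a * M + 2 * B)) as [N HN].
  exists N. intros n Hn s Hs.
  apply le_INR in Hn.
  destruct (iter_next_potential s n Hs) as [_ Hpot].
  pose proof (potential_lower s ltac:(lra)).
  pose proof (potential_upper (Nat.iter n (next a) s)).
  apply (Rmult_lt_reg_l (2 / Re a)); [apply Rdiv_lt_0_compat; lra|].
  unfold B in *. lra.
Qed.

Lemma phi_iter_inv (s : C) (n : nat) : Re s < -1/2 ->
  phi_iter a n (1 + / s) = (1 + / Nat.iter n (next a) s)%C.
Proof.
  intros Hs. unfold phi_iter. induction n as [|n IH]; [reflexivity|].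
  rewrite !Nat.iter_succ, IH.
  destruct (iter_next_potential s n Hs) as [Hre _].
  destruct (Re_add_lt _ Hre) as [_ Hsa].
  apply phi_inv; [apply neq0_of_Re_lt; lra | exact Hsa].
Qed.

End NextStep.

Lemma disk_of_Cmod_sub_quarter (a : C) :
  Cmod (a - RtoC (1/4)) <= 1/4 -> Cmod a ^ 2 <= Re a / 2.
Proof.
  intros Ha.
  assert (Hsq : Cmod (a - RtoC (1/4)) ^ 2 <= (1/4) ^ 2)
    by (apply pow_incr; split; [apply Cmod_ge_0 | exact Ha]).
  rewrite !Cmod2_alt in *. destruct a as [al be]. unfold Re, Im in *; simpl in *. nra.
Qed.

Lemma Re_pos_of_disk (a : C) : Cmod a ^ 2 <= Re a / 2 -> a <> 0%C -> 0 < Re a.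
Proof.
  intros Hdisk Ha0. assert (0 < Cmod a ^ 2) by (apply pow_lt, Cmod_gt_0, Ha0). lra.
Qed.

Lemma Re_inv_sub1_lt (z : C) : Cmod z < 1 -> Re (/ (z - 1)) < -1/2.
Proof.
  intros Hz.
  assert (Hz2 : Re z ^ 2 + Im z ^ 2 < 1).
  { rewrite <- Cmod2_alt. pose proof (Cmod_ge_0 z). nra. }
  destruct z as [x y]. unfold Re, Im in *. simpl in *.
  assert (HD : 0 < (x + - 1) ^ 2 + (y + - 0) ^ 2) by nra.
  apply (Rmult_lt_reg_r ((x + - 1) ^ 2 + (y + - 0) ^ 2)); [lra|].
  unfold Rdiv. rewrite Rmult_assoc, Rinv_l by lra. nra.
Qed.

Theorem mainTheorem4 (a : C) :
  Cmod (a - RtoC (1/4))%C <= 1/4 -> a <> RtoC 0 ->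
  forall eps : R, 0 < eps ->
  exists N : nat, forall n : nat, (N <= n)%nat ->
  forall z : C, Cmod z < 1 -> Cmod (phi_iter a n z - RtoC 1)%C < eps.
Proof.
  intros Ha Ha0 eps Heps.
  pose proof (disk_of_Cmod_sub_quarter a Ha) as Hdisk.
  pose proof (Re_pos_of_disk a Hdisk Ha0) as Hpos.
  destruct (iter_next_escapes a Hpos Hdisk (/ eps)) as [N HN].
  exists N. intros n Hn z Hz.
  pose proof (Re_inv_sub1_lt z Hz) as Hs.
  assert (Hz1 : (z - 1 <> 0)%C).
  { intro E. replace z with (z - 1 + 1)%C in Hz by ring. rewrite E, Cplus_0_l, Cmod_1 in Hz. lra. }
  replace z with (1 + / / (z - 1))%C by (field; exact Hz1).
  rewrite phi_iter_inv by assumption.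
  specialize (HN n Hn _ Hs).
  set (sn := Nat.iter n (next a) (/ (z - 1))%C) in *.
  assert (Hinv : 0 < / eps) by (apply Rinv_0_lt_compat; lra).
  assert (Hsn : sn <> 0%C) by (apply Cmod_gt_0; lra).
  replace (1 + / sn - 1)%C with (/ sn)%C by ring.
  rewrite Cmod_inv by exact Hsn.
  rewrite <- (Rinv_inv eps). apply Rinv_lt_contravar; nra.
Qed.
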